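(* Let $(M,g)$ be a space-time of dimension $n=4$ and $u$ a time-like unit vector field ($u_ku^k=-1$) that is Weyl compatible, i.e. $$(u_iC_{jklm}+u_jC_{kilm}+u_kC_{ijlm})u^m=0,$$ where $C_{abcd}$ is the Weyl tensor. Let $E_{ab}=u^bu^cC_{abcd}$-type electric part be defined by $E_{ad}=u^bu^cC_{abcd}$. Then $$C_{abcd}=2\big(u_au_dE_{bc}-u_au_cE_{bd}+u_bu_cE_{ad}-u_bu_dE_{ac}\big)+g_{ad}E_{bc}-g_{ac}E_{bd}+g_{bc}E_{ad}-g_{bd}E_{ac},$$ and $C^2=8E^2$, where $C^2=C_{abcd}C^{abcd}$ and $E^2=E_{ab}E^{ab}$.
   Context: Indices are raised and lowered with the metric $g$. *)

(* Pointwise (algebraic) formalization on the tangent space R^4. *)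
From HB Require Import structures.
From mathcomp Require Import all_boot all_order all_algebra.
From mathcomp Require Import reals.
Set Implicit Arguments. Unset Strict Implicit. Unset Printing Implicit Defensive.
Import Order.TTheory GRing.Theory Num.Theory.
Local Open Scope ring_scope.

Notation idx := 'I_4.

Definition minkowski (R : realType) : 'M[R]_4 :=
  diag_mx (\row_(i < 4) (if i == ord0 then -1 else 1)).

Definition lorentzian (R : realType) (g : 'M[R]_4) : Prop :=
  g^T = g /\ exists P : 'M[R]_4, P \in unitmx /\ P^T *m g *m P = minkowski R.

Definition ginv (R : realType) (g : 'M[R]_4) : 'M[R]_4 := invmx g.

Definition tensor4 (R : realType) := idx -> idx -> idx -> idx -> R.

Definition weyl_tensor (R : realType) (g : 'M[R]_4) (C : tensor4 R) : Prop :=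
  (forall a b c d, C a b c d = - C b a c d) /\
  (forall a b c d, C a b c d = - C a b d c) /\
  (forall a b c d, C a b c d = C c d a b) /\
  (forall a b c d, C a b c d + C a c d b + C a d b c = 0) /\
  (forall b d, \sum_(a < 4) \sum_(c < 4) ginv g a c * C a b c d = 0).

Definition lower (R : realType) (g : 'M[R]_4) (u : idx -> R) (a : idx) : R :=
  \sum_(b < 4) g a b * u b.

Definition weyl_compatible (R : realType) (g : 'M[R]_4) (C : tensor4 R)
  (u : idx -> R) : Prop :=
  forall i j k l,
    \sum_(m < 4) (lower g u i * C j k l m + lower g u j * C k i l m
                  + lower g u k * C i j l m) * u m = 0.

Definition electric (R : realType) (C : tensor4 R) (u : idx -> R) (a d : idx) : R :=
  \sum_(b < 4) \sum_(c < 4) u b * u c * C a b c d.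

Definition weyl_sq (R : realType) (g : 'M[R]_4) (C : tensor4 R) : R :=
  \sum_(a < 4) \sum_(b < 4) \sum_(c < 4) \sum_(d < 4)
   C a b c d *
   (\sum_(p < 4) \sum_(q < 4) \sum_(r < 4) \sum_(s < 4)
      ginv g a p * ginv g b q * ginv g c r * ginv g d s * C p q r s).

Definition tensor2_sq (R : realType) (g : 'M[R]_4) (E : idx -> idx -> R) : R :=
  \sum_(a < 4) \sum_(b < 4)
   E a b * (\sum_(p < 4) \sum_(q < 4) ginv g a p * ginv g b q * E p q).

From HB Require Import structures.
From mathcomp Require Import all_boot all_order all_algebra.
From mathcomp Require Import reals.
From mathcomp Require Import zify lra ring.
From Stdlib Require Import FunctionalExtensionality.
Set Implicit Arguments.
Unset Strict Implicit.
Unset Printing Implicit Defensive.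
Import Order.TTheory GRing.Theory Num.Theory.
Local Open Scope ring_scope.

(* Pick a frame Q adapted to u: Q^T g Q = diag(-1,1,1,1) and the first column of
   Q is u (an orthonormal frame followed by a Lorentz boost).  Contracting the
   compatibility condition with u^i gives C_jklm u^m = u_k E_jl - u_j E_kl, so in
   the frame every component of C with last index 0 is determined by E.  The
   right-hand side is the Kulkarni-Nomizu product (g + 2 u u) o E, and in the frame
   g + 2 u u is the identity.  The difference of the two sides therefore has the
   symmetries of a Weyl tensor and vanishes as soon as one index is 0; its spatial
   part is a trace-free algebraic curvature tensor in dimension 3, hence zero.
   Both squares are frame independent, and C^2 = 8 E^2 is a finite computation in
   the frame. *)

Section PullBack.
Variables (R : comPzRingType) (n : nat).
Implicit Types (Q M : 'M[R]_n).
Local Notation tensor2 := ('I_n -> 'I_n -> R).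
Local Notation tensor4 := ('I_n -> 'I_n -> 'I_n -> 'I_n -> R).

Definition sum4 (F : tensor4) : R :=
  \sum_(a < n) \sum_(b < n) \sum_(c < n) \sum_(d < n) F a b c d.

Lemma eq_sum4 (F G : tensor4) :
  (forall a b c d, F a b c d = G a b c d) -> sum4 F = sum4 G.
Proof. by move=> FG; do 4!apply: eq_bigr => ? _; exact: FG. Qed.

Lemma sum4_flat (F : tensor4) :
  sum4 F = \sum_(t : ('I_n * 'I_n) * ('I_n * 'I_n)) F t.1.1 t.1.2 t.2.1 t.2.2.
Proof.
rewrite /sum4; under eq_bigr do under eq_bigr do rewrite pair_bigA.
by rewrite pair_bigA pair_bigA.
Qed.

Lemma sum4_swap12 (F : tensor4) : sum4 F = sum4 (fun a b c d => F b a c d).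
Proof. exact: exchange_big. Qed.

Lemma sum4_swap23 (F : tensor4) : sum4 F = sum4 (fun a b c d => F a c b d).
Proof. by apply: eq_bigr => a _; exact: exchange_big. Qed.

Lemma sum4_swap34 (F : tensor4) : sum4 F = sum4 (fun a b c d => F a b d c).
Proof. by apply: eq_bigr => a _; apply: eq_bigr => b _; exact: exchange_big. Qed.

Lemma sum4_swap_pairs (F : tensor4) : sum4 F = sum4 (fun a b c d => F c d a b).
Proof. by rewrite sum4_swap23 sum4_swap12 sum4_swap34 sum4_swap23. Qed.

Lemma sum4_exchange (F : 'I_n -> 'I_n -> 'I_n -> 'I_n -> tensor4) :
  sum4 (fun a b c d => sum4 (F a b c d))
  = sum4 (fun p q r s => sum4 (fun a b c d => F a b c d p q r s)).
Proof.
rewrite sum4_flat; under eq_bigr do rewrite sum4_flat.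
by rewrite exchange_big sum4_flat; apply: eq_bigr => t _; rewrite sum4_flat.
Qed.

Lemma sum2_sum4 (F : 'I_n -> 'I_n -> tensor4) :
  \sum_i \sum_k sum4 (F i k) = sum4 (fun a b c d => \sum_i \sum_k F i k a b c d).
Proof.
rewrite pair_bigA; under eq_bigr do rewrite sum4_flat.
by rewrite exchange_big sum4_flat; apply: eq_bigr => t _; rewrite pair_bigA.
Qed.

Lemma sum4N (F : tensor4) : - sum4 F = sum4 (fun a b c d => - F a b c d).
Proof. by rewrite !sum4_flat sumrN. Qed.

Lemma sum4D (F G : tensor4) :
  sum4 F + sum4 G = sum4 (fun a b c d => F a b c d + G a b c d).
Proof. by rewrite !sum4_flat big_split. Qed.

Lemma mulr_sum4 (x : R) (F : tensor4) :
  x * sum4 F = sum4 (fun a b c d => x * F a b c d).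
Proof. by rewrite !sum4_flat mulr_sumr. Qed.

Lemma mulr_sum4l (x : R) (F : tensor4) :
  sum4 F * x = sum4 (fun a b c d => F a b c d * x).
Proof. by rewrite !sum4_flat mulr_suml. Qed.

Lemma sum4_prod (f g h k : 'I_n -> R) :
  (\sum_a f a) * (\sum_b g b) * (\sum_c h c) * (\sum_d k d)
  = sum4 (fun a b c d => f a * g b * h c * k d).
Proof.
rewrite /sum4 -!mulrA mulr_suml; apply: eq_bigr => a _.
rewrite mulr_suml mulr_sumr; apply: eq_bigr => b _.
rewrite mulr_suml !mulr_sumr; apply: eq_bigr => c _.
by rewrite !mulr_sumr; apply: eq_bigr => d _; rewrite !mulrA.
Qed.

Definition pull1 Q (v : 'I_n -> R) i : R := \sum_a Q a i * v a.

Definition pull2 Q (T : tensor2) i j : R := \sum_a \sum_b Q a i * Q b j * T a b.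

Definition pull4 Q (X : tensor4) i j k l : R :=
  sum4 (fun a b c d => Q a i * Q b j * Q c k * Q d l * X a b c d).

Lemma pull2_mx Q (g : 'M[R]_n) i j : pull2 Q (fun a b => g a b) i j = (Q^T *m g *m Q) i j.
Proof.
rewrite mxE; under [RHS]eq_bigr do rewrite !mxE mulr_suml.
rewrite exchange_big; apply: eq_bigr => a _; apply: eq_bigr => b _.
by rewrite !mxE; ring.
Qed.

Lemma pull2_outer Q (v w : 'I_n -> R) i j :
  pull2 Q (fun a b => v a * w b) i j = pull1 Q v i * pull1 Q w j.
Proof.
rewrite /pull2 /pull1 mulr_suml; apply: eq_bigr => a _.
by rewrite mulr_sumr; apply: eq_bigr => b _; ring.
Qed.

Lemma pull2_add_outer Q (T : tensor2) (x : R) (v : 'I_n -> R) i j :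
  pull2 Q (fun a b => T a b + x * (v a * v b)) i j
  = pull2 Q T i j + x * (pull1 Q v i * pull1 Q v j).
Proof.
rewrite -pull2_outer /pull2 mulr_sumr -big_split; apply: eq_bigr => a _.
by rewrite mulr_sumr -big_split; apply: eq_bigr => b _ /=; ring.
Qed.

Lemma pull2_mul Q (h k : tensor2) x y z w :
  pull2 Q h x y * pull2 Q k z w
  = sum4 (fun a b c d => Q a x * Q b y * Q c z * Q d w * (h a b * k c d)).
Proof.
rewrite /pull2 /sum4 mulr_suml; apply: eq_bigr => a _.
rewrite mulr_suml; apply: eq_bigr => b _.
rewrite mulr_sumr; apply: eq_bigr => c _.
by rewrite mulr_sumr; apply: eq_bigr => d _; ring.
Qed.

Lemma pull2_comp M N (T : tensor2) i j : pull2 M (pull2 N T) i j = pull2 (N *m M) T i j.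
Proof.
transitivity (sum4 (fun a b p q => N p a * M a i * (N q b * M b j) * T p q)).
  apply: eq_bigr => a _; apply: eq_bigr => b _; rewrite mulr_sumr.
  by apply: eq_bigr => p _; rewrite mulr_sumr; apply: eq_bigr => q _; ring.
rewrite sum4_swap_pairs; apply: eq_bigr => p _; apply: eq_bigr => q _.
rewrite !mxE -mulrA mulr_suml; apply: eq_bigr => a _.
by rewrite mulr_suml mulr_sumr; apply: eq_bigr => b _; ring.
Qed.

Lemma sum2_pull2 M (T S : tensor2) :
  \sum_a \sum_b pull2 M T a b * S a b = \sum_a \sum_b T a b * pull2 M^T S a b.
Proof.
transitivity (sum4 (fun a b p q => M p a * M q b * T p q * S a b)).
  apply: eq_bigr => a _; apply: eq_bigr => b _; rewrite mulr_suml.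
  by apply: eq_bigr => p _; rewrite mulr_suml.
rewrite sum4_swap_pairs; apply: eq_bigr => p _; apply: eq_bigr => q _.
rewrite mulr_sumr; apply: eq_bigr => a _; rewrite mulr_sumr.
by apply: eq_bigr => b _; rewrite !mxE; ring.
Qed.

Lemma pull4_comp M N (X : tensor4) i j k l :
  pull4 M (pull4 N X) i j k l = pull4 (N *m M) X i j k l.
Proof.
rewrite /pull4; under eq_sum4 do rewrite mulr_sum4.
rewrite sum4_exchange; apply: eq_sum4 => p q r s.
by rewrite !mxE sum4_prod mulr_sum4l; apply: eq_sum4 => a b c d; ring.
Qed.

Lemma sum4_pull4 M (X Y : tensor4) :
  sum4 (fun a b c d => pull4 M X a b c d * Y a b c d)
  = sum4 (fun a b c d => X a b c d * pull4 M^T Y a b c d).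
Proof.
rewrite /pull4; under eq_sum4 do rewrite mulr_sum4l.
rewrite sum4_exchange; apply: eq_sum4 => p q r s.
by rewrite mulr_sum4; apply: eq_sum4 => a b c d; rewrite !mxE; ring.
Qed.

Lemma sum_diag_mx (e : 'rV[R]_n) (i : 'I_n) (F : 'I_n -> R) :
  \sum_a diag_mx e a i * F a = e 0 i * F i.
Proof.
rewrite (bigD1 i) //= mxE eqxx mulr1n big1 ?addr0 // => a /negbTE ai.
by rewrite mxE ai mulr0n mul0r.
Qed.

Lemma pull2_diag (e : 'rV[R]_n) (T : tensor2) i j :
  pull2 (diag_mx e) T i j = e 0 i * e 0 j * T i j.
Proof.
rewrite /pull2; under eq_bigr do under eq_bigr do rewrite -mulrA.
under eq_bigr do rewrite -mulr_sumr sum_diag_mx.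
by rewrite sum_diag_mx mulrA.
Qed.

Lemma pull4_diag (e : 'rV[R]_n) (X : tensor4) i j k l :
  pull4 (diag_mx e) X i j k l = e 0 i * e 0 j * e 0 k * e 0 l * X i j k l.
Proof.
rewrite /pull4 /sum4.
under eq_bigr do under eq_bigr do under eq_bigr do under eq_bigr do rewrite -!mulrA.
under eq_bigr do under eq_bigr do under eq_bigr do rewrite -!mulr_sumr sum_diag_mx.
under eq_bigr do under eq_bigr do rewrite -!mulr_sumr sum_diag_mx.
under eq_bigr do rewrite -!mulr_sumr sum_diag_mx.
by rewrite sum_diag_mx !mulrA.
Qed.

Lemma pull4_id (X : tensor4) i j k l : pull4 1%:M X i j k l = X i j k l.
Proof. by rewrite -diag_const_mx pull4_diag !mxE !mul1r. Qed.

Section Covariance.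
Variables (Q : 'M[R]_n) (X : tensor4).

Lemma pull4_antisym12 : (forall a b c d, X a b c d = - X b a c d) ->
  forall i j k l, pull4 Q X i j k l = - pull4 Q X j i k l.
Proof.
move=> hX i j k l; rewrite /pull4 sum4N [in RHS]sum4_swap12.
by apply: eq_sum4 => a b c d /=; rewrite hX; ring.
Qed.

Lemma pull4_antisym34 : (forall a b c d, X a b c d = - X a b d c) ->
  forall i j k l, pull4 Q X i j k l = - pull4 Q X i j l k.
Proof.
move=> hX i j k l; rewrite /pull4 sum4N [in RHS]sum4_swap34.
by apply: eq_sum4 => a b c d /=; rewrite hX; ring.
Qed.

Lemma pull4_pair_sym : (forall a b c d, X a b c d = X c d a b) ->
  forall i j k l, pull4 Q X i j k l = pull4 Q X k l i j.
Proof.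
move=> hX i j k l; rewrite /pull4 [in RHS]sum4_swap_pairs.
by apply: eq_sum4 => a b c d /=; rewrite hX; ring.
Qed.

Lemma pull4_trace H :
  (forall b d, \sum_a \sum_c (Q *m H *m Q^T) a c * X a b c d = 0) ->
  forall j l, \sum_i \sum_k H i k * pull4 Q X i j k l = 0.
Proof.
move=> hX j l; under eq_bigr do under eq_bigr do rewrite mulr_sum4.
rewrite sum2_sum4.
transitivity (sum4 (fun a b c d => Q b j * Q d l * ((Q *m H *m Q^T) a c * X a b c d))).
  apply: eq_sum4 => a b c d; rewrite mxE; under [in RHS]eq_bigr do rewrite !mxE mulr_suml.
  rewrite [in RHS]exchange_big !mulr_suml !mulr_sumr; apply: eq_bigr => i _.
  by rewrite !mulr_suml !mulr_sumr; apply: eq_bigr => k _; ring.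
rewrite sum4_swap12 sum4_swap23 sum4_swap34 sum4_swap23 sum4_swap34.
rewrite /sum4 big1 // => b _; rewrite big1 // => d _.
rewrite -[RHS](mulr0 (Q b j * Q d l)) -[in RHS](hX b d) mulr_sumr.
by apply: eq_bigr => a _; rewrite mulr_sumr.
Qed.

Variables (o : 'I_n) (v : 'I_n -> R).
Hypothesis Q_col : forall a, Q a o = v a.

Lemma pull4_contract (l : 'I_n -> R) (E : tensor2) :
  (forall a b c, \sum_d X a b c d * v d = l b * E a c - l a * E b c) ->
  forall i j k, pull4 Q X i j k o = pull1 Q l j * pull2 Q E i k - pull1 Q l i * pull2 Q E j k.
Proof.
move=> hX i j k.
transitivity (\sum_a \sum_b \sum_c Q a i * Q b j * Q c k * (l b * E a c - l a * E b c)).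
  apply: eq_bigr => a _; apply: eq_bigr => b _; apply: eq_bigr => c _.
  by rewrite -hX mulr_sumr; apply: eq_bigr => d _; rewrite Q_col; ring.
rewrite [pull1 Q l j * _]mulrC /pull1 /pull2 !mulr_suml -sumrB.
apply: eq_bigr => a _; rewrite mulr_sumr [X in _ - X]mulr_sumr -sumrB.
apply: eq_bigr => b _; rewrite mulr_suml mulr_sumr -sumrB.
by apply: eq_bigr => c _; ring.
Qed.

Lemma pull1_contract (g : 'M[R]_n) i :
  pull1 Q (fun a => \sum_b g a b * v b) i = (Q^T *m g *m Q) i o.
Proof.
rewrite -pull2_mx; apply: eq_bigr => a _; rewrite mulr_sumr.
by apply: eq_bigr => b _; rewrite Q_col; ring.
Qed.

Lemma pull4_electric i j :
  pull4 Q X i o o j = pull2 Q (fun a d => \sum_b \sum_c v b * v c * X a b c d) i j.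
Proof.
rewrite /pull4 sum4_swap34 sum4_swap23; apply: eq_bigr => a _; apply: eq_bigr => d _.
rewrite mulr_sumr; apply: eq_bigr => b _; rewrite mulr_sumr.
by apply: eq_bigr => c _; rewrite !Q_col; ring.
Qed.

End Covariance.

Definition kulkarni_nomizu (h k : tensor2) : tensor4 :=
  fun a b c d => h a d * k b c - h a c * k b d + h b c * k a d - h b d * k a c.

Lemma pull4_kulkarni_nomizu Q h k i j k' l :
  pull4 Q (kulkarni_nomizu h k) i j k' l
  = kulkarni_nomizu (pull2 Q h) (pull2 Q k) i j k' l.
Proof.
have outer_adbc h' k'' x y z w : pull2 Q h' x w * pull2 Q k'' y z
    = pull4 Q (fun a b c d => h' a d * k'' b c) x y z w.
  by rewrite pull2_mul sum4_swap23 sum4_swap34; apply: eq_sum4 => a b c d /=; ring.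
have outer_acbd h' k'' x y z w : pull2 Q h' x z * pull2 Q k'' y w
    = pull4 Q (fun a b c d => h' a c * k'' b d) x y z w.
  by rewrite pull2_mul sum4_swap23; apply: eq_sum4 => a b c d /=; ring.
rewrite /kulkarni_nomizu [pull2 Q h j k' * _]mulrC [pull2 Q h j l * _]mulrC.
rewrite (outer_adbc h k) (outer_acbd h k) (outer_adbc k h) (outer_acbd k h) /pull4.
by rewrite !sum4N !sum4D; apply: eq_sum4 => a b c d; ring.
Qed.

Lemma kulkarni_nomizu_antisym12 h k a b c d :
  kulkarni_nomizu h k a b c d = - kulkarni_nomizu h k b a c d.
Proof. by rewrite /kulkarni_nomizu; ring. Qed.

Lemma kulkarni_nomizu_antisym34 h k a b c d :
  kulkarni_nomizu h k a b c d = - kulkarni_nomizu h k a b d c.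
Proof. by rewrite /kulkarni_nomizu; ring. Qed.

Lemma kulkarni_nomizu_pair_sym h k a b c d :
  (forall x y, h x y = h y x) -> (forall x y, k x y = k y x) ->
  kulkarni_nomizu h k a b c d = kulkarni_nomizu h k c d a b.
Proof.
move=> hC kC; rewrite /kulkarni_nomizu (hC c b) (hC c a) (hC d a) (hC d b).
by rewrite (kC d a) (kC d b) (kC c b) (kC c a); ring.
Qed.

End PullBack.

Lemma mulmx1_invmx (R : comUnitRingType) n (A B : 'M[R]_n) :
  A *m B = 1%:M -> invmx A = B.
Proof.
move=> AB; have [A_unit _] := mulmx1_unit AB.
by rewrite -[invmx A]mulmx1 -AB mulKmx.
Qed.

Lemma pull4K (R : comUnitRingType) n (Q : 'M[R]_n) : Q \in unitmx ->
  forall X i j k l, pull4 (invmx Q) (pull4 Q X) i j k l = X i j k l.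
Proof. by move=> Q_unit X i j k l; rewrite pull4_comp mulmxV // pull4_id. Qed.

Lemma ord3_cover (i : 'I_3) {p q r : 'I_3} :
  p != q -> p != r -> q != r -> [|| i == p, i == q | i == r].
Proof.
rewrite -!(inj_eq (@ord_inj 3)).
by move: (ltn_ord i) (ltn_ord p) (ltn_ord q) (ltn_ord r); lia.
Qed.

Lemma ord3_third {p q : 'I_3} : p != q -> exists r : 'I_3, (r != p) && (r != q).
Proof.
move: (ltn_ord p) (ltn_ord q); rewrite -(inj_eq (@ord_inj 3)) => hp hq pq.
by exists (inord (3 - p - q)); rewrite -!(inj_eq (@ord_inj 3)) inordK; lia.
Qed.

Lemma ord3_share {a b c d : 'I_3} :
  a != b -> c != d -> [|| a == c, a == d, b == c | b == d].
Proof.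
rewrite -!(inj_eq (@ord_inj 3)).
by move: (ltn_ord a) (ltn_ord b) (ltn_ord c) (ltn_ord d); lia.
Qed.

Lemma sum_ord3 {R : nmodType} (F : 'I_3 -> R) {p q r : 'I_3} :
  p != q -> p != r -> q != r -> \sum_i F i = F p + F q + F r.
Proof.
move=> pq pr qr; rewrite (bigD1 p) //= (bigD1 q) 1?eq_sym //=.
rewrite (bigD1 r) /=; last by rewrite eq_sym pr eq_sym qr.
rewrite big_pred0 ?addr0 ?addrA // => i.
by case/or3P: (ord3_cover i pq pr qr) => ->; rewrite ?andbF.
Qed.

(* In dimension 3 two pairs {a, b} and {c, d} with a != b, c != d share an index,
   so up to sign every component has the form X p q p s, and the traces kill those. *)
Lemma weyl3_eq0 (R : realFieldType) (X : 'I_3 -> 'I_3 -> 'I_3 -> 'I_3 -> R) :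
  (forall a b c d, X a b c d = - X b a c d) ->
  (forall a b c d, X a b c d = - X a b d c) ->
  (forall b d, \sum_a X a b a d = 0) ->
  forall a b c d, X a b c d = 0.
Proof.
move=> A1 A2 trX.
have X_aa a c d : X a a c d = 0 by have := A1 a a c d; lra.
have X_cc a b c : X a b c c = 0 by have := A2 a b c c; lra.
have off p q s : p != q -> p != s -> q != s -> X p q p s = 0.
  by move=> pq ps qs; have := trX q s; rewrite (sum_ord3 _ pq ps qs) X_aa X_cc !addr0.
have diag p q : p != q -> X p q p q = 0.
  move=> pq; have [r /andP[rp rq]] := ord3_third pq.
  have [pr qr] : p != r /\ q != r by rewrite !(eq_sym _ r).
  have := trX p p; have := trX q q; have := trX r r.
  rewrite !(sum_ord3 _ pq pr qr) !X_aa.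
  have := A1 q p q p; have := A2 p q q p; have := A1 r p r p; have := A2 p r r p.
  have := A1 r q r q; have := A2 q r r q.
  lra.
have pair p q s : p != q -> p != s -> X p q p s = 0.
  by move=> pq ps; have [<-|qs] := eqVneq q s; [exact: diag | exact: off].
move=> a b c d.
have [<-|ab] := eqVneq a b; first exact: X_aa.
have [<-|cd] := eqVneq c d; first exact: X_cc.
case/or4P: (ord3_share ab cd) => /eqP e; subst.
- exact: pair.
- by rewrite A2 pair ?oppr0 // eq_sym.
- by rewrite A1 pair ?oppr0 // eq_sym.
- by rewrite A1 A2 opprK pair // eq_sym.
Qed.

Local Notation i1 := (@Ordinal 4 1 isT).
Local Notation i2 := (@Ordinal 4 2 isT).
Local Notation i3 := (@Ordinal 4 3 isT).

Variant ord4_spec (i : 'I_4) : Prop :=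
  | Ord4_0 of i = ord0 | Ord4_1 of i = i1 | Ord4_2 of i = i2 | Ord4_3 of i = i3.

Lemma ord4P (i : 'I_4) : ord4_spec i.
Proof.
case: i => [[|[|[|[|m]]]] lt_i] //.
- by apply: Ord4_0; apply: val_inj.
- by apply: Ord4_1; apply: val_inj.
- by apply: Ord4_2; apply: val_inj.
- by apply: Ord4_3; apply: val_inj.
Qed.

Lemma sum_ord4 {V : nmodType} (F : 'I_4 -> V) :
  \sum_(i < 4) F i = F ord0 + F i1 + F i2 + F i3.
Proof.
rewrite !big_ord_recr big_ord0 /= add0r.
by congr (_ + _ + _ + _); congr F; exact: val_inj.
Qed.

Section Minkowski.
Variable R : realType.
Local Notation eta := (minkowski R).

Lemma minkowskiE (a b : 'I_4) :
  eta a b = if a == b then (if a == ord0 then -1 else 1) else 0.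
Proof. by rewrite !mxE; have [->|ab] := eqVneq a b; rewrite ?eqxx // (negbTE ab). Qed.

Lemma minkowski_tr : eta^T = eta.
Proof. exact: tr_diag_mx. Qed.

Lemma minkowski_sq : eta *m eta = 1%:M.
Proof.
rewrite mulmx_diag -diag_const_mx; congr diag_mx; apply/rowP => i.
by rewrite !mxE; case: ifP; rewrite ?mulrNN mulr1.
Qed.

Lemma minkowski_unit : eta \in unitmx.
Proof. by case: (mulmx1_unit minkowski_sq). Qed.

Lemma minkowski_inv : ginv eta = eta.
Proof. exact: mulmx1_invmx minkowski_sq. Qed.

Lemma sum_minkowski (a : 'I_4) (F : 'I_4 -> R) : \sum_b eta a b * F b = eta a a * F a.
Proof.
rewrite (bigD1 a) //= big1 ?addr0 // => b ba.
by rewrite minkowskiE eq_sym (negbTE ba) mul0r.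
Qed.

(* The Lorentz boost taking e_0 to the future-pointing unit timelike vector w. *)
Definition boost (w : 'I_4 -> R) : 'M[R]_4 :=
  \matrix_(i, j) if i == ord0 then w j else if j == ord0 then w i
                 else (i == j)%:R + w i * w j / (1 + w ord0).

Lemma boost_col0 w a : boost w a ord0 = w a.
Proof. by rewrite mxE; case: eqP => [->|]. Qed.

Lemma boost_isometry w :
  0 < w ord0 -> - w ord0 ^+ 2 + w i1 ^+ 2 + w i2 ^+ 2 + w i3 ^+ 2 = -1 ->
  (boost w)^T *m eta *m boost w = eta.
Proof.
move=> w0_gt0 norm_w; have w0_neq : 1 + w ord0 != 0 by rewrite gt_eqF //; lra.
pose f a := if a == ord0 then 1 else w a / (1 + w ord0).
have key a b : pull2 (boost w) (fun i j => eta i j) a b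
    = eta a b + (- w ord0 ^+ 2 + w i1 ^+ 2 + w i2 ^+ 2 + w i3 ^+ 2 + 1) * (f a * f b).
  rewrite /pull2 !sum_ord4 !minkowskiE !mxE /f.
  by case: (ord4P a) => ->; case: (ord4P b) => ->; rewrite /=; field.
by apply/matrixP => a b; rewrite -pull2_mx key norm_w addNr mul0r addr0.
Qed.

Lemma isometry_unit (B : 'M[R]_4) : B^T *m eta *m B = eta -> B \in unitmx.
Proof.
move=> isoB; suff /mulmx1_unit[] : (eta *m B^T *m eta) *m B = 1%:M by [].
by rewrite -!mulmxA (mulmxA B^T) isoB minkowski_sq.
Qed.

Lemma minkowski_norm (w : 'I_4 -> R) :
  \sum_a \sum_b eta a b * (w a * w b)
  = - w ord0 ^+ 2 + w i1 ^+ 2 + w i2 ^+ 2 + w i3 ^+ 2.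
Proof. by under eq_bigr do rewrite sum_minkowski; rewrite sum_ord4 !minkowskiE /=; ring. Qed.

Lemma lorentz_frame (g : 'M[R]_4) (u : 'I_4 -> R) :
  lorentzian g -> \sum_k lower g u k * u k = -1 ->
  exists Q : 'M[R]_4, [/\ Q \in unitmx, Q^T *m g *m Q = eta & forall a, Q a ord0 = u a].
Proof.
case=> _ [P [P_unit Pg]] u_unit.
pose w a := \sum_b invmx P a b * u b.
have Pw a : \sum_b P a b * w b = u a.
  have := congr1 (fun M : 'cV[R]_4 => M a 0) (mulKVmx P_unit (\col_b u b)).
  rewrite !mxE => <-; apply: eq_bigr => b _; rewrite mxE; congr (_ * _).
  by apply: eq_bigr => c _; rewrite mxE.
have norm_w : - w ord0 ^+ 2 + w i1 ^+ 2 + w i2 ^+ 2 + w i3 ^+ 2 = -1.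
  rewrite -minkowski_norm -u_unit -Pg.
  under eq_bigr do under eq_bigr do rewrite -pull2_mx.
  rewrite sum2_pull2; under eq_bigr do under eq_bigr do rewrite pull2_outer.
  rewrite /pull1; apply: eq_bigr => k _; rewrite /lower mulr_suml.
  apply: eq_bigr => j _; under eq_bigr do rewrite mxE; rewrite Pw.
  under eq_bigr do rewrite mxE; by rewrite Pw; ring.
(* Boost to s w, which is future pointing, and undo the sign by scaling the frame. *)
pose s : R := if 0 < w ord0 then 1 else -1.
have ss : s * s = 1 by rewrite /s; case: ifP => _; rewrite ?mulrNN mulr1.
have s2 : s ^+ 2 = 1 by rewrite expr2.
pose B := boost (fun a => s * w a).
have isoB : B^T *m eta *m B = eta.
  apply: boost_isometry; last by rewrite !exprMn s2 !mul1r.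
  rewrite /s; case: ifPn => [|/negbTE w0]; first by rewrite mul1r.
  by move: norm_w w0; rewrite mulN1r oppr_gt0 ltNge => hn /negbFE; nra.
exists (s *: (P *m B)); split.
- have s_unit : s \is a GRing.unit by rewrite unitfE /s; case: ifP; rewrite ?oppr_eq0 oner_eq0.
  by rewrite unitmxZ // unitmx_mul P_unit isometry_unit.
- rewrite linearZ /= linearZ /= -!scalemxAl scalerA ss scale1r trmx_mul.
  by rewrite mulmxA -(mulmxA B^T) -(mulmxA B^T) Pg.
- move=> a; rewrite mxE mxE -Pw mulr_sumr; apply: eq_bigr => b _.
  by rewrite /B boost_col0 -[RHS]mul1r -ss; ring.
Qed.

Lemma lorentzian_unit (g : 'M[R]_4) : lorentzian g -> g \in unitmx.
Proof.
case=> _ [P [_ Pg]]; have := minkowski_unit.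
by rewrite -Pg !unitmx_mul => /andP[/andP[_ ->]].
Qed.

End Minkowski.

Section Invariance.
Variable R : realType.
Implicit Types (g Q : 'M[R]_4).

Lemma ginv_pull g Q : g \in unitmx -> Q \in unitmx ->
  ginv (Q^T *m g *m Q) = invmx Q *m ginv g *m (invmx Q)^T.
Proof.
move=> g_unit Q_unit; apply: mulmx1_invmx.
rewrite !mulmxA mulmxK // -(mulmxA Q^T) mulmxV // mulmx1 -trmx_mul.
by rewrite mulVmx // trmx1.
Qed.

Lemma ginv_frame g Q : g \in unitmx -> Q \in unitmx ->
  Q^T *m g *m Q = minkowski R -> ginv g = Q *m minkowski R *m Q^T.
Proof.
move=> g_unit Q_unit Qg.
rewrite -[in RHS]minkowski_inv -[in RHS]Qg ginv_pull // !mulmxA mulmxV // mul1mx.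
by rewrite -mulmxA -trmx_mul mulmxV // trmx1 mulmx1.
Qed.

Lemma weyl_sqE g (C : tensor4 R) :
  weyl_sq g C = sum4 (fun a b c d => C a b c d * pull4 (ginv g)^T C a b c d).
Proof.
do 4!apply: eq_bigr => ? _; congr (_ * _).
by do 4!apply: eq_bigr => ? _; rewrite !mxE.
Qed.

Lemma tensor2_sqE g (E : 'I_4 -> 'I_4 -> R) :
  tensor2_sq g E = \sum_a \sum_b E a b * pull2 (ginv g)^T E a b.
Proof.
do 2!apply: eq_bigr => ? _; congr (_ * _).
by do 2!apply: eq_bigr => ? _; rewrite !mxE.
Qed.

Lemma pulled_inverse_metric g Q : g \in unitmx -> Q \in unitmx ->
  Q *m ((ginv (Q^T *m g *m Q))^T *m Q^T) = (ginv g)^T.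
Proof.
move=> g_unit Q_unit; rewrite ginv_pull // !trmx_mul trmxK !mulmxA mulmxV // mul1mx.
by rewrite -mulmxA -trmx_mul mulmxV // trmx1 mulmx1.
Qed.

Lemma weyl_sq_pull g Q (C : tensor4 R) : g \in unitmx -> Q \in unitmx ->
  weyl_sq (Q^T *m g *m Q) (pull4 Q C) = weyl_sq g C.
Proof.
move=> g_unit Q_unit; rewrite !weyl_sqE sum4_pull4; apply: eq_sum4 => a b c d.
by rewrite !pull4_comp pulled_inverse_metric.
Qed.

Lemma tensor2_sq_pull g Q (E : 'I_4 -> 'I_4 -> R) : g \in unitmx -> Q \in unitmx ->
  tensor2_sq (Q^T *m g *m Q) (pull2 Q E) = tensor2_sq g E.
Proof.
move=> g_unit Q_unit; rewrite !tensor2_sqE sum2_pull2.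
by do 2!apply: eq_bigr => ? _; rewrite !pull2_comp pulled_inverse_metric.
Qed.

End Invariance.

Section AdaptedFrame.
Variable R : realType.
Local Notation eta := (minkowski R).
Local Notation tensor4 := (tensor4 R).
Implicit Types (X : tensor4) (E : 'I_4 -> 'I_4 -> R).

Lemma minkowski_weyl_eq0 X :
  (forall a b c d, X a b c d = - X b a c d) ->
  (forall a b c d, X a b c d = - X a b d c) ->
  (forall a b c d, X a b c d = X c d a b) ->
  (forall b d, \sum_i \sum_k eta i k * X i b k d = 0) ->
  (forall a b c, X a b c ord0 = 0) ->
  forall a b c d, X a b c d = 0.
Proof.
move=> A1 A2 A3 trX X_0.
have X_0c a b d : X a b ord0 d = 0 by rewrite A2 X_0 oppr0.
have X_0b a c d : X a ord0 c d = 0 by rewrite A3 X_0.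
have X_0a b c d : X ord0 b c d = 0 by rewrite A1 X_0b oppr0.
pose Y i j k l := X (lift ord0 i) (lift ord0 j) (lift ord0 k) (lift ord0 l).
have Y_eq0 : forall i j k l, Y i j k l = 0.
  apply: weyl3_eq0 => [i j k l|i j k l|j l]; rewrite /Y; [exact: A1 | exact: A2 |].
  have := trX (lift ord0 j) (lift ord0 l).
  under eq_bigr do rewrite sum_minkowski.
  rewrite big_ord_recl X_0a mulr0 add0r => tr3; rewrite -[RHS]tr3.
  by apply: eq_bigr => i _; rewrite minkowskiE eqxx eq_sym (negbTE (neq_lift _ _)) mul1r.
move=> a b c d.
case: (unliftP ord0 a) => [i ->|->]; last exact: X_0a.
case: (unliftP ord0 b) => [j ->|->]; last exact: X_0b.
case: (unliftP ord0 c) => [k ->|->]; last exact: X_0c.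
case: (unliftP ord0 d) => [l ->|->]; last exact: X_0.
exact: Y_eq0.
Qed.

Lemma minkowski_col0 (a : 'I_4) : eta a ord0 = - (a == ord0)%:R.
Proof. by rewrite minkowskiE; case: (ord4P a) => ->; rewrite /= ?oppr0. Qed.

Lemma minkowski_shift (a b : 'I_4) :
  eta a b + 2 * (eta a ord0 * eta b ord0) = (1%:M : 'M[R]_4) a b.
Proof.
rewrite !minkowskiE mxE.
by case: (ord4P a) => ->; case: (ord4P b) => ->; rewrite /=; ring.
Qed.

Section ElectricPart.
Variable E : 'I_4 -> 'I_4 -> R.
Hypotheses (E_sym : forall a c, E a c = E c a) (E_0 : forall a, E a ord0 = 0)
  (E_tr : \sum_a \sum_c eta a c * E a c = 0).

Let E_canonical :
  [/\ forall x, E ord0 x = 0, E i2 i1 = E i1 i2, E i3 i1 = E i1 i3,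
      E i3 i2 = E i2 i3 & E i3 i3 = - E i1 i1 - E i2 i2].
Proof.
split=> [x||||]; try exact: E_sym; first by rewrite E_sym E_0.
move: E_tr; under eq_bigr do rewrite sum_minkowski.
by rewrite sum_ord4 !minkowskiE /= E_0; lra.
Qed.

Lemma minkowski_kulkarni_nomizu_trace b d :
  \sum_i \sum_k eta i k * kulkarni_nomizu 1%:M E i b k d = 0.
Proof.
have [E0x E21 E31 E32 E33] := E_canonical.
under eq_bigr do rewrite sum_minkowski /kulkarni_nomizu minkowskiE !mxE.
rewrite sum_ord4.
by case: (ord4P b) => ->; case: (ord4P d) => ->;
  rewrite /= ?E_0 ?E0x ?E21 ?E31 ?E32 ?E33; ring.
Qed.

Lemma minkowski_kulkarni_nomizu_sq :
  weyl_sq eta (kulkarni_nomizu 1%:M E) = 8 * tensor2_sq eta E.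
Proof.
have [E0x E21 E31 E32 E33] := E_canonical.
rewrite weyl_sqE tensor2_sqE minkowski_inv minkowski_tr /minkowski.
under eq_sum4 do rewrite pull4_diag /kulkarni_nomizu !mxE.
under eq_bigr do under eq_bigr do rewrite pull2_diag !mxE.
rewrite /sum4.
under [in LHS]eq_bigr do under eq_bigr do under eq_bigr do rewrite sum_ord4.
under [in LHS]eq_bigr do under eq_bigr do rewrite sum_ord4.
under [in LHS]eq_bigr do rewrite sum_ord4.
rewrite [in LHS]sum_ord4; under eq_bigr do rewrite sum_ord4.
rewrite sum_ord4 /= ?E_0 ?E0x ?E21 ?E31 ?E32 ?E33.
ring.
Qed.

End ElectricPart.

Section AdaptedWeyl.
Variable X : tensor4.
Hypotheses (A1 : forall a b c d, X a b c d = - X b a c d)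
  (A2 : forall a b c d, X a b c d = - X a b d c)
  (A3 : forall a b c d, X a b c d = X c d a b)
  (trX : forall b d, \sum_i \sum_k eta i k * X i b k d = 0)
  (X_0 : forall a b c, X a b c ord0
                       = eta b ord0 * X a ord0 ord0 c - eta a ord0 * X b ord0 ord0 c).

Let E a c := X a ord0 ord0 c.

Let E_sym a c : E a c = E c a.
Proof. by rewrite /E (A3 a) (A1 ord0) (A2 c) opprK. Qed.

Let E_0 a : E a ord0 = 0.
Proof. by have := A2 a ord0 ord0 ord0; rewrite /E; lra. Qed.

Let E_tr : \sum_a \sum_c eta a c * E a c = 0.
Proof.
transitivity (- \sum_a \sum_c eta a c * X a ord0 c ord0); last by rewrite trX oppr0.
rewrite -sumrN; apply: eq_bigr => a _.
by rewrite -sumrN; apply: eq_bigr => c _; rewrite /E A2 mulrN.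
Qed.

Lemma adapted_weyl_decomposition a b c d : X a b c d = kulkarni_nomizu 1%:M E a b c d.
Proof.
apply/eqP; rewrite -subr_eq0; apply/eqP; move: a b c d.
apply: minkowski_weyl_eq0 => [a b c d|a b c d|a b c d|b d|a b c].
- by rewrite (A1 a) (kulkarni_nomizu_antisym12 _ _ a); ring.
- by rewrite (A2 a) (kulkarni_nomizu_antisym34 _ _ a); ring.
- by rewrite (A3 a) (kulkarni_nomizu_pair_sym _ _ a b) // => x y; rewrite !mxE eq_sym.
- transitivity ((\sum_i \sum_k eta i k * X i b k d)
                - \sum_i \sum_k eta i k * kulkarni_nomizu 1%:M E i b k d).
    rewrite -sumrB; apply: eq_bigr => i _.
    by rewrite -sumrB; apply: eq_bigr => k _; ring.
  by rewrite trX minkowski_kulkarni_nomizu_trace ?subrr.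
- by rewrite X_0 /kulkarni_nomizu !minkowski_col0 !mxE !E_0 /E; ring.
Qed.

Lemma adapted_weyl_sq : weyl_sq eta X = 8 * tensor2_sq eta E.
Proof.
have -> : X = kulkarni_nomizu 1%:M E.
  by do 4!apply: functional_extensionality => ?; exact: adapted_weyl_decomposition.
exact: minkowski_kulkarni_nomizu_sq.
Qed.

End AdaptedWeyl.

End AdaptedFrame.

Lemma weyl_compatible_contract (R : realType) (g : 'M[R]_4) (C : tensor4 R) (u : 'I_4 -> R) :
  (forall a b c d, C a b c d = - C b a c d) ->
  (forall a b c d, C a b c d = - C a b d c) ->
  \sum_k lower g u k * u k = -1 -> weyl_compatible g C u ->
  forall j k l, \sum_m C j k l m * u m
                = lower g u k * electric C u j l - lower g u j * electric C u k l.
Proof.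
move=> A1 A2 u_unit compat j k l; set lu := lower g u.
pose V := \sum_m C j k l m * u m.
have E_kl : \sum_i u i * \sum_m C k i l m * u m = - electric C u k l.
  rewrite /electric -sumrN; apply: eq_bigr => i _.
  by rewrite mulr_sumr -sumrN; apply: eq_bigr => m _; rewrite (A2 k); ring.
have E_jl : \sum_i u i * \sum_m C i j l m * u m = electric C u j l.
  apply: eq_bigr => i _; rewrite mulr_sumr; apply: eq_bigr => m _.
  by rewrite (A1 i) (A2 j); ring.
have split_i i :
    u i * \sum_m (lu i * C j k l m + lu j * C k i l m + lu k * C i j l m) * u m
    = lu i * u i * V + lu j * (u i * \sum_m C k i l m * u m)
      + lu k * (u i * \sum_m C i j l m * u m).
  by rewrite !mulr_sumr -!big_split; apply: eq_bigr => m _ /=; ring.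
have : \sum_i (lu i * u i * V + lu j * (u i * \sum_m C k i l m * u m)
               + lu k * (u i * \sum_m C i j l m * u m)) = 0.
  by rewrite big1 // => i _; rewrite -split_i compat mulr0.
rewrite !big_split -!mulr_sumr -mulr_suml u_unit E_kl E_jl /= => h.
by rewrite -/V -[LHS]addr0 -[0 in LHS]h; ring.
Qed.

Section WeylCompatible.
Variables (R : realType) (g : 'M[R]_4) (C : tensor4 R) (u : 'I_4 -> R).
Hypotheses (A1 : forall a b c d, C a b c d = - C b a c d)
  (A2 : forall a b c d, C a b c d = - C a b d c)
  (A3 : forall a b c d, C a b c d = C c d a b)
  (trC : forall b d, \sum_a \sum_c ginv g a c * C a b c d = 0)
  (u_unit : \sum_k lower g u k * u k = -1) (compat : weyl_compatible g C u)
  (g_unit : g \in unitmx).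
Variable Q : 'M[R]_4.
Hypotheses (Q_unit : Q \in unitmx) (Qg : Q^T *m g *m Q = minkowski R)
  (Q_col : forall a, Q a ord0 = u a).

Let Ch := pull4 Q C.

Let E_frame : pull2 Q (electric C u) = fun i j => Ch i ord0 ord0 j.
Proof. by do 2!apply: functional_extensionality => ?; rewrite /Ch (pull4_electric C Q_col). Qed.

Let l_frame i : pull1 Q (lower g u) i = minkowski R i ord0.
Proof. by rewrite (pull1_contract Q_col) Qg. Qed.

Let Ch1 := pull4_antisym12 Q A1.
Let Ch2 := pull4_antisym34 Q A2.
Let Ch3 := pull4_pair_sym Q A3.

Let Ch_tr b d : \sum_i \sum_k minkowski R i k * Ch i b k d = 0.
Proof. by move: b d; apply: pull4_trace; rewrite -(ginv_frame g_unit Q_unit Qg). Qed.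

Let Ch_0 a b c : Ch a b c ord0
    = minkowski R b ord0 * Ch a ord0 ord0 c - minkowski R a ord0 * Ch b ord0 ord0 c.
Proof.
have V_eq := weyl_compatible_contract A1 A2 u_unit compat.
by rewrite /Ch (pull4_contract Q_col V_eq) !l_frame E_frame.
Qed.

Lemma weyl_compatible_decomposition a b c d :
  C a b c d = kulkarni_nomizu (fun x y => g x y + 2 * (lower g u x * lower g u y))
                              (electric C u) a b c d.
Proof.
rewrite -(pull4K Q_unit C) -[RHS](pull4K Q_unit).
apply: eq_sum4 => i j k l; congr (_ * _).
rewrite pull4_kulkarni_nomizu (adapted_weyl_decomposition Ch1 Ch2 Ch3 Ch_tr Ch_0).
by rewrite /kulkarni_nomizu !pull2_add_outer !pull2_mx Qg !l_frame !minkowski_shift E_frame.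
Qed.

Lemma weyl_compatible_sq : weyl_sq g C = 8 * tensor2_sq g (electric C u).
Proof.
rewrite -(weyl_sq_pull C g_unit Q_unit) -(tensor2_sq_pull _ g_unit Q_unit) Qg E_frame.
exact: adapted_weyl_sq.
Qed.

End WeylCompatible.

Theorem proposition3p1 (R : realType) (g : 'M[R]_4) (C : tensor4 R)
  (u : 'I_4 -> R) :
  lorentzian g ->
  weyl_tensor g C ->
  \sum_(k < 4) lower g u k * u k = -1 ->
  weyl_compatible g C u ->
  (forall a b c d,
     C a b c d =
       2 * (lower g u a * lower g u d * electric C u b c
            - lower g u a * lower g u c * electric C u b d
            + lower g u b * lower g u c * electric C u a d
            - lower g u b * lower g u d * electric C u a c)
       + g a d * electric C u b c - g a c * electric C u b d
       + g b c * electric C u a d - g b d * electric C u a c)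
  /\ weyl_sq g C = 8 * tensor2_sq g (electric C u).
Proof.
move=> g_lor [A1 [A2 [A3 [_ trC]]]] u_unit compat.
have g_unit := lorentzian_unit g_lor.
have [Q [Q_unit Qg Q_col]] := lorentz_frame g_lor u_unit.
split=> [a b c d|]; last exact: weyl_compatible_sq Q_unit Qg Q_col.
by rewrite (weyl_compatible_decomposition A1 A2 A3 trC u_unit compat g_unit Q_unit Qg Q_col)
  /kulkarni_nomizu; ring.
Qed.
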